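(* Let $\alpha\ge1$ and suppose an algorithm for the maximum density subtree problem is given which, on any instance, returns a subtree whose density is at least $1/\alpha$ times the maximum density. Then the greedy algorithm (described in the context) using this algorithm is a $4\alpha$-approximation algorithm for the expanding search problem: the expanding search $\sigma^{\mathrm g}$ it returns satisfies $c(\sigma^{\mathrm g})\le 4\alpha\,c(\sigma^\star)$, where $\sigma^\star$ is an optimal expanding search.
   Context: Expanding search problem: $G=(V,E)$ is a connected graph with root $r$, probabilities $p_v\in[0,1]$ with $p_r=0$, $\sum_v p_v=1$, and edge lengths $\lambda_e>0$; $n=|V\setminus\{r\}|$. An expanding search is a sequence of edges $\sigma=(e_1,\dots,e_n)$ with $r\in e_1$ such that each $e_k$ connects an unvisited vertex to a previously visited vertex (so $\{e_1,\dots,e_k\}$ is a tree containing $r$ for every $k$). For $v\in V$, $\lambda(v,\sigma)=\sum_{i=1}^k\lambda_{e_i}$ where $e_k$ is the first edge of $\sigma$ containing $v$ (and $\lambda(r,\sigma)=0$). The search cost is $c(\sigma)=\sum_{v\in V}p_v\lambda(v,\sigma)$; the problem is to minimize it. Maximum density subtree problem: given a graph $H$ with root $r$, nonnegative vertex weights $p$ and positive edge lengths $\ell$, among subtrees $T$ of $H$ containing $r$ with positive total length, maximize the density $\rho(T)=p(V[T])/\ell(E[T])$ (sums of weights and lengths). Contraction: for $S\subseteq V$ with $r\in S$, $G/S$ has vertex set $(V\setminus S)\cup\{r\}$ and edges: all $\{v,w\}\in E$ with $v,w\in V\setminus S$ (length $\lambda_{\{v,w\}}$), and $\{r,w\}$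 for each $w\in V\setminus S$ for which $C(w,S)=\{\{v,w\}\in E: v\in S\}$ is nonempty, with length $\min_{e'\in C(w,S)}\lambda_{e'}$. Denote these lengths $\lambda^S$. Greedy algorithm: set $i\gets1$, $S\gets\{r\}$. While some $v\in V\setminus S$ has $p_v>0$: let $T_i$ be the tree returned by the given approximation algorithm for the maximum density subtree problem on $G/S$ with probabilities $(p_v)$ and lengths $\lambda^S$; let $\sigma_i$ be an arbitrary expanding search of tree $T_i$ (from $r$); set $S\gets S\cup V[T_i]$ and increment $i$. Finally let $\sigma^{\mathrm g}$ be the expanding search obtained by concatenating $\sigma_1,\sigma_2,\dots$ and replacing each edge incident to $r$ in a contracted graph by a corresponding length-minimizing edge of $G$ (vertices of zero probability left unvisited are appended arbitrarily). *)

From HB Require Import structures.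
From mathcomp Require Import all_boot all_order all_algebra.
Set Implicit Arguments. Unset Strict Implicit. Unset Printing Implicit Defensive.
Import Order.TTheory GRing.Theory Num.Theory.
Local Open Scope ring_scope.

(* Graphs on a finite vertex type T (V = all of T) with root r.
   An (undirected) edge is a 2-element set {set T}; an edge set is a
   {set {set T}}; lengths are a function {set T} -> R (only its values on
   edges matter). *)
Section Search.
Variables (R : realFieldType) (T : finType) (r : T).

Definition adj (F : {set {set T}}) : rel T := fun x y => [set x; y] \in F.

Definition verts (F : {set {set T}}) : {set T} := r |: \bigcup_(e in F) e.

(* F is (the edge set of) a tree containing r: connected, and acyclic
   (every edge is a bridge: its endpoints are disconnected without it). *)
Definition is_tree (F : {set {set T}}) : Prop :=
  (forall v, v \in verts F -> connect (adj F) r v) /\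
  (forall x y, [set x; y] \in F -> ~~ connect (adj (F :\ [set x; y])) x y).

Definition subtree (E' F : {set {set T}}) : Prop := F \subset E' /\ is_tree F.

Definition dens (p : T -> R) (l : {set T} -> R) (F : {set {set T}}) : R :=
  (\sum_(v in verts F) p v) / (\sum_(e in F) l e).

Definition mds_approx (alpha : R)
    (A : (T -> R) -> {set {set T}} -> ({set T} -> R) -> {set {set T}}) : Prop :=
  forall (p' : T -> R) (E' : {set {set T}}) (l' : {set T} -> R),
    (forall v, 0 <= p' v) ->
    (forall e, e \in E' -> #|e| = 2%N /\ 0 < l' e) ->
    (exists F, subtree E' F /\ F != set0) ->
    subtree E' (A p' E' l') /\ A p' E' l' != set0 /\
    (forall F', subtree E' F' -> F' != set0 ->
       dens p' l' F' <= alpha * dens p' l' (A p' E' l')).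

Definition visited (s : seq {set T}) : {set T} := r |: \bigcup_(e <- s) e.

Definition expanding (F : {set {set T}}) (U : {set T}) (s : seq {set T}) : Prop :=
  (forall k, (k < size s)%N ->
     nth set0 s k \in F /\
     exists u v, [/\ nth set0 s k = [set u; v], u \in visited (take k s)
                   & v \notin visited (take k s)]) /\
  visited s = U.

Definition lam_at (l : {set T} -> R) (s : seq {set T}) (v : T) : R :=
  if v == r then 0 else \sum_(e <- take (find (fun e : {set T} => v \in e) s).+1 s) l e.

Definition cost (l : {set T} -> R) (p : T -> R) (s : seq {set T}) : R :=
  \sum_v p v * lam_at l s v.

(* minimum of a nonempty list (0 on the empty list; never used there) *)
Definition seqmin (s : seq R) : R :=
  if s is x :: s' then foldr Num.min x s' else 0.

Section Contraction.
Variables (E : {set {set T}}) (lam : {set T} -> R).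

(* For e = {r, w} in G/S: C(w,S) = edges {v,w} of G with v in S. *)
Definition Cset (S : {set T}) (e : {set T}) : {set {set T}} :=
  [set f in E | (f :\: S == e :\ r) && (f :&: S != set0)].

Definition Econ (S : {set T}) : {set {set T}} :=
  [set e in E | [disjoint e & S]] :|:
  [set [set r; w] | w in [set w | (w \notin S) &&
        [exists f in E, (w \in f) && (f :&: S != set0)]]].

Definition lenS (S : {set T}) (e : {set T}) : R :=
  if r \in e then seqmin [seq lam f | f <- enum (Cset S e)] else lam e.

Variables (p : T -> R)
  (A : (T -> R) -> {set {set T}} -> ({set T} -> R) -> {set {set T}}).

Definition guard (S : {set T}) : bool := [exists v, (v \notin S) && (0 < p v)].

Definition gtree (S : {set T}) : {set {set T}} := A p (Econ S) (lenS S).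

Definition gstep (S : {set T}) : {set T} :=
  if guard S then S :|: verts (gtree S) else S.

Definition Siter (i : nat) : {set T} := iter i gstep [set r].

Definition replaced (S : {set T}) (rho tau : seq {set T}) : Prop :=
  size tau = size rho /\
  forall k, (k < size rho)%N ->
    (r \in nth set0 rho k ->
       nth set0 tau k \in Cset S (nth set0 rho k) /\
       lam (nth set0 tau k) = lenS S (nth set0 rho k)) /\
    (r \notin nth set0 rho k -> nth set0 tau k = nth set0 rho k).

(* sigma is a possible output of the greedy algorithm: the loop runs exactly
   k times, sigma is the concatenation of the replaced searches sigma_i of the
   trees T_i, followed by an arbitrary tail. *)
Definition greedy_output (sigma : seq {set T}) : Prop :=
  exists (k : nat) (taus : seq (seq {set T})) (tail : seq {set T}),
    [/\ size taus = k,
        (forall i, (i < k)%N -> guard (Siter i)),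
        ~~ guard (Siter k),
        sigma = flatten taus ++ tail
      & forall i, (i < k)%N ->
          exists rho, expanding (gtree (Siter i)) (verts (gtree (Siter i))) rho
                      /\ replaced (Siter i) rho (nth [::] taus i)].

End Contraction.
End Search.

From HB Require Import structures.
From mathcomp Require Import all_boot all_order all_algebra.
From mathcomp Require Import ring lra.
Set Implicit Arguments. Unset Strict Implicit. Unset Printing Implicit Defensive.
Import Order.TTheory GRing.Theory Num.Theory.
Local Open Scope ring_scope.

(* Let S_j be the set of visited vertices before phase j of the greedy algorithm, L_j the
   length in G/S_j of the tree T_j it adds, M_j the probability of the new vertices of T_j and
   R_j = p(V \ S_j), so that M_j = R_j - R_(j+1).  Every vertex still unvisited at phase j
   waits for T_j, hence c(sigma_g) <= sum_j L_j R_j.  On the other hand, for every a >= 0 the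
   prefix of length a of an optimal search contracts to a subtree of G/S_j of length <= a, so
   the alpha-approximate density of T_j bounds the probability of the unvisited vertices that
   the optimal search finds before time a by alpha a M_j / L_j.  For a_j = R_j L_j / (2 alpha M_j)
   at least half of R_j is therefore found only after time a_j, and
   sum_j L_j R_j = 2 alpha sum_j (R_j - R_(j+1)) a_j <= 4 alpha c(sigma),
   the last step being a summation by parts against the running maximum of the a_j. *)

Section ExpandingSequences.
Variables (T : finType) (r : T).
Implicit Types (s : seq {set T}) (e : {set T}) (F : {set {set T}}).

Definition expands s e : Prop :=
  exists u v, [/\ e = [set u; v], u \in visited r s & v \notin visited r s].

Definition expanding_seq s : Prop :=
  forall k, (k < size s)%N -> expands (take k s) (nth set0 s k).

Lemma expandingP F U s :
  expanding r F U s -> [/\ expanding_seq s, {subset s <= F} & visited r s = U].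
Proof.
case=> step visU; split=> // [k /step[] // | e es].
by have := step (index e s); rewrite index_mem nth_index // => /(_ es) [].
Qed.

Lemma mem_bigcup_seq x s : (x \in \bigcup_(e <- s) e) = has (fun e => x \in e) s.
Proof. by rewrite bigcup_seq; apply/bigcupP/hasP => -[e es xe]; exists e. Qed.

Lemma visited_nil : visited r [::] = [set r].
Proof. by rewrite /visited big_nil setU0. Qed.

Lemma visited_rcons s e : visited r (rcons s e) = visited r s :|: e.
Proof. by rewrite /visited -cats1 big_cat big_seq1 setUA. Qed.

Lemma root_visited s : r \in visited r s.
Proof. exact: setU11. Qed.

Lemma mem_visited s e x : e \in s -> x \in e -> x \in visited r s.
Proof.
by move=> es xe; rewrite in_setU1 mem_bigcup_seq; apply/predU1P; right; apply/hasP; exists e.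
Qed.

Lemma verts_seq s : verts r [set e in s] = visited r s.
Proof.
congr (_ |: _); apply/setP => x; rewrite mem_bigcup_seq.
by apply/bigcupP/hasP => -[e]; rewrite ?inE => es xe; exists e; rewrite ?inE.
Qed.

Lemma verts_set0 : verts r set0 = [set r].
Proof. by rewrite /verts big_set0 setU0. Qed.

Lemma expanding_seq_rcons s e :
  expanding_seq (rcons s e) <-> expanding_seq s /\ expands s e.
Proof.
have takeE k : (k <= size s)%N -> take k (rcons s e) = take k s.
  by move=> ks; rewrite -cats1 takel_cat.
split=> [xs | [xs xe] k].
  split=> [k ks | ].
    have := xs k; rewrite size_rcons ltnS (ltnW ks) nth_rcons ks takeE ?(ltnW ks) //.
    by apply.
  have := xs (size s); rewrite size_rcons ltnS leqnn nth_rcons ltnn eqxx takeE //.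
  by rewrite take_size; apply.
rewrite size_rcons ltnS leq_eqVlt nth_rcons => /predU1P[->|ks].
  by rewrite ltnn eqxx takeE // take_size.
by rewrite ks takeE ?(ltnW ks) //; apply: xs.
Qed.

Lemma expanding_seq_take n s : expanding_seq s -> expanding_seq (take n s).
Proof.
move=> xs k; rewrite size_take_min leq_min => /andP[kn ks].
by rewrite nth_take // take_takel ?(ltnW kn) //; apply: xs.
Qed.

Lemma expanding_seq_uniq s : expanding_seq s -> uniq s.
Proof.
elim/last_ind: s => [//|s e IH] /expanding_seq_rcons[xs [u [w [-> _ wV]]]].
rewrite rcons_uniq IH // andbT; apply: contra wV => es.
by apply: mem_visited es _; rewrite set22.
Qed.

Lemma adj_sym F : symmetric (adj F).
Proof. by move=> x y; rewrite /adj setUC. Qed.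

Lemma connect_adj_sym F : connect_sym (adj F).
Proof. exact/sym_connect_sym/adj_sym. Qed.

Lemma connect_adj_subset F F' x y :
  F \subset F' -> connect (adj F) x y -> connect (adj F') x y.
Proof. by move=> /subsetP FF'; apply: connect_sub => a b /FF' ab; apply: connect1. Qed.

Lemma connect_isolated F w x :
  (forall b, [set w; b] \notin F) -> connect (adj F) w x -> x = w.
Proof.
move=> isow; have cl : closed (adj F) (pred1 w).
  apply: (intro_closed (connect_adj_sym F)) => a b ab /eqP wa.
  by move: ab; rewrite /adj wa (negbTE (isow b)).
by move/(closed_connect cl); rewrite !inE eqxx => /esym/eqP.
Qed.

Lemma connect_pendant F u w x y :
  (forall b, [set w; b] \notin F) -> x != w ->
  connect (adj ([set u; w] |: F)) x y -> connect (adj F) x y \/ y = w.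
Proof.
move=> isow xw.
have xw_F : ~~ connect (adj F) x w.
  by rewrite connect_adj_sym; apply: contra xw => /(connect_isolated isow)/eqP.
pose C := [pred z | connect (adj F) x z || (z == w) && connect (adj F) x u].
have cl : closed (adj ([set u; w] |: F)) C.
  apply: (intro_closed (connect_adj_sym _)) => z z'; rewrite /adj in_setU1 !inE.
  case/predU1P => [zz'E | zz'F].
    have /set2P z'uw : z' \in [set u; w] by rewrite -zz'E set22.
    have /set2P zuw : z \in [set u; w] by rewrite -zz'E set21.
    case: z'uw zuw => -> [] -> //; first by rewrite (negbTE xw_F) eqxx /= => ->.
    by rewrite eqxx => /orP[|/andP[_]] ->; rewrite ?orbT.
  case/orP => [xz | /andP[/eqP zw _]]; first by rewrite (connect_trans xz (connect1 zz'F)).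
  by move: zz'F; rewrite zw (negbTE (isow z')).
move/(closed_connect cl); rewrite !inE connect0 => /esym /orP[]; first by left.
by case/andP=> /eqP; right.
Qed.

Lemma expanding_seq_tree s : expanding_seq s -> is_tree r [set e in s].
Proof.
rewrite /is_tree verts_seq.
elim/last_ind: s => [_|s e IH /expanding_seq_rcons[xs [u [w [-> uV wV]]]]].
  split=> [v|x y]; last by rewrite inE.
  by rewrite visited_nil inE => /eqP ->.
have [conn bridge] := IH xs; set Fs := [set e in s].
have FE : [set e' in rcons s [set u; w]] = [set u; w] |: Fs.
  by apply/setP => z; rewrite !inE mem_rcons in_cons.
have unvisited_isolated z b : z \notin visited r s -> [set z; b] \notin Fs.
  by move=> zV; rewrite inE; apply: contra zV => /mem_visited; apply; rewrite set21.
have isow b : [set w; b] \notin Fs := unvisited_isolated w b wV.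
have uwFs : [set u; w] \notin Fs by rewrite setUC; apply: isow.
have sub : Fs \subset [set u; w] |: Fs by apply: subsetUr.
rewrite FE; split=> [v | x y].
  rewrite visited_rcons in_setU => /orP[/conn/(connect_adj_subset sub) // | /set2P[]->].
    exact/(connect_adj_subset sub)/conn.
  apply: connect_trans (connect_adj_subset sub (conn u uV)) (connect1 _).
  by rewrite /adj setU11.
rewrite in_setU1 => /predU1P[xyE | xyF].
  rewrite xyE setU1K //; apply/negP => cxy.
  have [xw yw] : x = w /\ y = w.
    have /set2P[] : w \in [set x; y] by rewrite xyE set22.
      by move=> xw; move: cxy; rewrite -xw => /(connect_isolated isow) ->.
    by move=> yw; move: cxy; rewrite -yw connect_adj_sym => /(connect_isolated isow) ->.
  have : u \in [set x; y] by rewrite xyE set21.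
  by rewrite xw yw setUid inE => /eqP uw; rewrite -uw uV in wV.
have visited_xy z : z \in [set x; y] -> z \in visited r s.
  by apply: mem_visited; rewrite inE in xyF.
have xw : x != w by apply: contraNneq wV => <-; rewrite visited_xy ?set21.
have -> : ([set u; w] |: Fs) :\ [set x; y] = [set u; w] |: (Fs :\ [set x; y]).
  apply/setP => z; rewrite !inE; case: (z =P [set u; w]) => // ->.
  by case: eqP => // uwE; rewrite uwE xyF in uwFs.
apply/negP => /(connect_pendant _ xw)[ | cxy | yw].
- by move=> b; rewrite in_setD1 (negbTE (isow b)) andbF.
- by move: (bridge x y xyF); rewrite cxy.
- by move: wV; rewrite -yw visited_xy ?set22.
Qed.

End ExpandingSequences.

Lemma seqmin_mem (R : realFieldType) (s : seq R) x : x \in s -> seqmin s \in s.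
Proof.
case: s => [//|y s] _ /=; elim: s => [|a s IH] /=; first by rewrite inE.
rewrite minEle !inE; case: ifP => _; first by rewrite eqxx orbT.
by move: IH; rewrite !inE => /orP[] ->; rewrite ?orbT.
Qed.

Lemma seqmin_le (R : realFieldType) (s : seq R) x : x \in s -> seqmin s <= x.
Proof.
case: s => [//|y s] /=; elim: s => [|a s IH] /=; first by rewrite inE => /eqP ->.
rewrite ge_min !inE => /or3P[xy | /eqP-> | xs]; last by rewrite IH ?orbT // inE xs orbT.
  by rewrite IH ?orbT // inE xy.
by rewrite lexx.
Qed.

Section Contraction.
Variables (R : realFieldType) (T : finType) (r : T) (E : {set {set T}}) (lam : {set T} -> R).
Hypotheses (E2 : forall e, e \in E -> #|e| = 2%N) (lam_gt0 : forall e, e \in E -> 0 < lam e).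
Variable S : {set T}.
Hypothesis rS : r \in S.

Local Notation ES := (Econ r E S).
Local Notation lamS := (lenS r E lam S).

Lemma Cset_edge u w : [set u; w] \in E -> u \in S -> w \notin S ->
  [set u; w] \in Cset r E S [set r; w].
Proof.
move=> uwE uS wS; rewrite inE uwE /=; apply/andP; split; last first.
  by apply/set0Pn; exists u; rewrite !inE eqxx.
apply/eqP/setP => z; rewrite !inE.
have wr : w != r by apply: contraNneq wS => ->.
case: (z =P w) => [->|_]; first by rewrite wS wr !orbT.
by rewrite !orbF; case: (z =P u) => [->|_]; rewrite ?uS ?andbF; case: (_ == r).
Qed.

Lemma lenS_le_Cset w f : f \in Cset r E S [set r; w] -> lamS [set r; w] <= lam f.
Proof. by move=> fC; rewrite /lenS set21; apply/seqmin_le/map_f; rewrite mem_enum. Qed.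

Lemma Econ_edge e : e \in ES -> #|e| = 2%N /\ 0 < lamS e.
Proof.
rewrite in_setU inE => /orP[/andP[eE eS] | /imsetP[w]].
  by rewrite /lenS (disjointFl eS rS) E2 // lam_gt0.
rewrite inE => /andP[wS /existsP[f /and3P[fE wf /set0Pn[u /setIP[uf uS]]]]] ->.
have rw : r != w by apply: contraNneq wS => <-.
have uw : u != w by apply: contraNneq wS => <-.
have fuw : f = [set u; w].
  apply/esym/eqP; rewrite eqEcard cards2 uw E2 // andbT.
  by apply/subsetP => z /set2P[]->.
have fC : lam f \in [seq lam g | g <- enum (Cset r E S [set r; w])].
  by rewrite map_f // mem_enum fuw Cset_edge // -fuw.
split; first by rewrite cards2 rw.
have /mapP[g] := seqmin_mem fC; rewrite mem_enum inE => /andP[gE _].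
by rewrite /lenS set21 => ->; apply: lam_gt0.
Qed.

Lemma lenS_ge0 e : e \in ES -> 0 <= lamS e.
Proof. by case/Econ_edge => _ /ltW. Qed.

Lemma lenS_sum_gt0 (F : {set {set T}}) : F \subset ES -> F != set0 -> 0 < \sum_(e in F) lamS e.
Proof.
move=> /subsetP FES /set0Pn[e eF]; rewrite (bigD1 e) //=.
have [_ lam_e] := Econ_edge (FES e eF).
by rewrite ltr_wpDr // sumr_ge0 // => f /andP[/FES/lenS_ge0].
Qed.

(* The image in G/S of an expanding search of G: edges adding no vertex outside S are dropped,
   and an edge leaving S is replaced by the corresponding edge at the root. *)
Definition contract_edge (e : {set T}) : {set T} :=
  if [disjoint e & S] then e else r |: (e :\: S).

Definition contract_step (c : seq {set T}) (e : {set T}) : seq {set T} :=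
  if e \subset S :|: visited r c then c else rcons c (contract_edge e).

Definition contract (s : seq {set T}) : seq {set T} := foldl contract_step [::] s.

Lemma contract_rcons s e : contract (rcons s e) = contract_step (contract s) e.
Proof. exact: foldl_rcons. Qed.

Lemma visited_contract s : visited r (contract s) = r |: (visited r s :\: S).
Proof.
elim/last_ind: s => [|s e IH].
  rewrite /contract /= visited_nil; apply/setP => z; rewrite !inE.
  by case: (z == r); rewrite ?andbF.
rewrite contract_rcons /contract_step visited_rcons; case: ifP => [/subsetP eS | _].
  apply/setP => z; rewrite IH !inE; case ze: (z \in e); rewrite ?orbF ?andbF //=.
  move: (eS z ze); rewrite IH !inE.
  by case: (z \in S); rewrite ?orbT //= orbF => ->.
rewrite visited_rcons IH /contract_edge; case: ifP => [dis | _]; apply/setP => z; rewrite !inE.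
  by case ze: (z \in e); rewrite ?(disjointFr dis ze) ?orbF ?orbT.
by case: (z == r); case: (z \in S); case: (z \in e); rewrite ?orbT ?orbF.
Qed.

Lemma setU_visited_contract s : S :|: visited r (contract s) = S :|: visited r s.
Proof.
apply/setP => z; rewrite visited_contract !inE.
by case: (z =P r) => [->|_]; rewrite ?rS ?root_visited //; case: (z \in S).
Qed.

Lemma contract_edge_fresh s e :
  expands r s e -> ~~ (e \subset S :|: visited r s) -> e \in E ->
  [/\ expands r (contract s) (contract_edge e), contract_edge e \in ES
    & lamS (contract_edge e) <= lam e].
Proof.
case=> u [w [-> uV wV]] fresh uwE.
have wS : w \notin S.
  by apply: contra fresh => wS; apply/subsetP => z /set2P[]->; rewrite inE ?uV ?wS ?orbT.
have rw : r != w by apply: contraNneq wS => <-.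
have dis : u \notin S -> [disjoint [set u; w] & S].
  by move=> uS; rewrite disjoints_subset; apply/subsetP => z /set2P[]->; rewrite inE.
pose u' := if u \in S then r else u.
have ceE : contract_edge [set u; w] = [set u'; w].
  rewrite /contract_edge /u'; case: ifPn => [uwS|nuwS]; case: ifPn => uS //.
  - by move: uS; rewrite (disjointFr uwS (set21 u w)).
  - apply/setP => z; rewrite !inE.
    case: (z =P w) => [->|_]; first by rewrite wS !orbT.
    by rewrite !orbF; case: (z =P u) => [->|_]; rewrite ?uS ?andbF ?orbF.
  - by rewrite dis in nuwS.
rewrite ceE /u'; split.
- exists u', w; rewrite /u' visited_contract !in_setU1 !in_setD (negbTE wV) andbF orbF.
  by rewrite (eq_sym w r) (negbTE rw); split=> //; case: ifP => uS; rewrite ?eqxx //= uS uV orbT.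
- rewrite in_setU; case: ifPn => uS; apply/orP; [right | left].
    apply/imsetP; exists w => //; rewrite inE wS /=; apply/existsP; exists [set u; w].
    by rewrite uwE set22 /=; apply/set0Pn; exists u; rewrite !inE eqxx.
  by rewrite inE uwE dis.
- case: ifPn => uS; first exact/lenS_le_Cset/Cset_edge.
  by rewrite /lenS (disjointFl (dis uS) rS).
Qed.

Lemma contract_spec s : expanding_seq r s -> {subset s <= E} ->
  [/\ expanding_seq r (contract s), {subset contract s <= ES}
    & \sum_(e <- contract s) lamS e <= \sum_(e <- s) lam e].
Proof.
elim/last_ind: s => [|s e IH]; first by rewrite /contract !big_nil.
move=> /expanding_seq_rcons[xs xe] sE.
have [f fs | xc cE clen] := IH xs; first by apply: sE; rewrite mem_rcons inE fs orbT.
have eE : e \in E by apply: sE; rewrite mem_rcons mem_head.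
rewrite contract_rcons /contract_step setU_visited_contract -(cats1 s) big_cat big_seq1.
case: ifPn => fresh; first by split=> //; rewrite ler_wpDr // ltW // lam_gt0.
have [ce_exp ce_ES ce_len] := contract_edge_fresh xe fresh eE.
split; first by apply/expanding_seq_rcons.
  by move=> f; rewrite mem_rcons inE => /predU1P[->|/cE].
by rewrite -cats1 big_cat big_seq1 lerD.
Qed.

Lemma contract_subtree s : expanding_seq r s -> {subset s <= E} ->
  exists F, [/\ subtree r ES F, verts r F = r |: (visited r s :\: S)
    & \sum_(e in F) lamS e <= \sum_(e <- s) lam e].
Proof.
move=> xs sE; have [xc cE clen] := contract_spec xs sE.
exists [set e in contract s]; split.
- split; last exact: expanding_seq_tree.
  by apply/subsetP => e; rewrite inE => /cE.
- by rewrite verts_seq visited_contract.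
rewrite (big_uniq _ (expanding_seq_uniq xc)) in clen.
by apply: le_trans clen; rewrite (eq_bigl _ _ (in_set _)).
Qed.

End Contraction.

Section Charging.
Variables (R : realFieldType) (V : finType) (p lm : V -> R) (c : R) (k : nat) (a rho : nat -> R).
Hypotheses (p_ge0 : forall v, 0 <= p v) (lm_ge0 : forall v, 0 <= lm v) (c_ge0 : 0 <= c)
  (a_ge0 : forall j, (j < k)%N -> 0 <= a j)
  (rho_dec : forall j, (j < k)%N -> rho j.+1 <= rho j) (rho_k_ge0 : 0 <= rho k)
  (rho_le_tail : forall j, (j < k)%N -> rho j <= c * \sum_(v | a j < lm v) p v).

Let tail t := \sum_(v | t < lm v) p v.

(* Against the running maximum of the a_j, the charge of each vertex telescopes. *)
Fixpoint runmax j := if j is i.+1 then Num.max (runmax i) (a i) else 0.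

Let runmaxS j : runmax j.+1 = Num.max (runmax j) (a j).
Proof. by []. Qed.

Let runmax_ge0 j : 0 <= runmax j.
Proof. by elim: j => [|j IH] //=; rewrite le_max IH. Qed.

Let runmax_le j : runmax j <= runmax j.+1.
Proof. by rewrite /= le_max lexx. Qed.

Let rho_le_tail_runmax j : (j < k)%N -> rho j <= c * tail (runmax j.+1).
Proof.
elim: j => [|j IH] jk; rewrite runmaxS; first by rewrite (max_r (a_ge0 jk)); apply: rho_le_tail.
have [_ | _] := lerP (runmax j.+1) (a j.+1); first exact: rho_le_tail.
exact: le_trans (rho_dec (ltnW jk)) (IH (ltnW jk)).
Qed.

Let summation_by_parts n :
  \sum_(j < n) (rho j - rho j.+1) * runmax j.+1 + rho n * runmax n
  = \sum_(j < n) rho j * (runmax j.+1 - runmax j).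
Proof.
elim: n => [|n IH]; first by rewrite !big_ord0 mulr0 addr0.
by rewrite !big_ord_recr /= -IH; ring.
Qed.

Let telescope_below x n : 0 <= x ->
  \sum_(j < n) (if runmax j.+1 < x then runmax j.+1 - runmax j else 0) <= Num.min x (runmax n).
Proof.
move=> x_ge0; elim: n => [|n IH]; first by rewrite big_ord0 le_min x_ge0 lexx.
rewrite big_ord_recr /= le_min; move: IH; rewrite le_min => /andP[IHx IHn].
case: ifP => lt_x; last by rewrite addr0 IHx; apply: le_trans IHn (runmax_le n).
by apply/andP; split; lra.
Qed.

Let sum_tail_mul (d : nat -> R) n :
  \sum_(j < n) tail (runmax j.+1) * d j
  = \sum_v p v * \sum_(j < n) (if runmax j.+1 < lm v then d j else 0).
Proof.
under [RHS]eq_bigr => v _ do rewrite big_distrr /=.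
rewrite [RHS]exchange_big /=; apply: eq_bigr => j _.
rewrite /tail big_distrl big_mkcond /=; apply: eq_bigr => v _.
by case: ifP; rewrite ?mulr0.
Qed.

Lemma sum_drops_le_expectation :
  \sum_(j < k) (rho j - rho j.+1) * a j <= c * \sum_v p v * lm v.
Proof.
apply: (@le_trans _ _ (\sum_(j < k) (rho j - rho j.+1) * runmax j.+1)).
  apply: ler_sum => j _; apply: ler_wpM2l; first by rewrite subr_ge0 rho_dec.
  by rewrite /= le_max lexx orbT.
apply: le_trans (_ : _ <= \sum_(j < k) (rho j - rho j.+1) * runmax j.+1 + rho k * runmax k) _.
  by rewrite lerDl mulr_ge0 ?runmax_ge0.
rewrite summation_by_parts.
apply: (@le_trans _ _ (c * \sum_(j < k) tail (runmax j.+1) * (runmax j.+1 - runmax j))).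
  rewrite mulr_sumr; apply: ler_sum => j _.
  by rewrite mulrA ler_wpM2r ?subr_ge0 ?rho_le_tail_runmax.
rewrite (sum_tail_mul (fun j => runmax j.+1 - runmax j)) ler_wpM2l // ler_sum // => v _.
rewrite ler_wpM2l //.
by have := telescope_below k (lm_ge0 v); rewrite le_min => /andP[].
Qed.

End Charging.

Lemma ler_sum_subset (R : numDomainType) (I : finType) (P Q : pred I) (f : I -> R) :
  (forall x, P x -> Q x) -> (forall x, Q x -> 0 <= f x) ->
  \sum_(x | P x) f x <= \sum_(x | Q x) f x.
Proof.
move=> PQ f_ge0; rewrite big_mkcond [X in _ <= X]big_mkcond /=; apply: ler_sum => x _.
by case: ifP => [/PQ -> // | _]; case: ifP => // /f_ge0.
Qed.

Lemma density_mul_le (R : realFieldType) (q n l m L a alpha : R) :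
  0 < l -> 0 < L -> l <= a -> 0 <= alpha * m -> q <= n -> n / l <= alpha * (m / L) ->
  q * L <= alpha * m * a.
Proof.
move=> l_gt0 L_gt0 la am_ge0 qn; rewrite ler_pdivrMr // => n_le.
apply: le_trans (_ : n * L <= _); first by rewrite ler_wpM2r // ltW.
apply: le_trans (_ : alpha * m * l <= _); last by rewrite ler_wpM2l.
have -> : alpha * m * l = alpha * (m / L) * l * L by field; rewrite gt_eqF.
by rewrite ler_wpM2r // ltW.
Qed.

Lemma exists_entry (T : finType) (X : nat -> {set T}) v n :
  v \in X n -> v \notin X 0 -> exists2 i, (i < n)%N & (v \notin X i) && (v \in X i.+1).
Proof.
elim: n => [|n IH] vn v0; first by rewrite vn in v0.
have [vn' | vn'] := boolP (v \in X n); last by exists n; rewrite ?vn' ?vn.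
by have [i i_lt vi] := IH vn' v0; exists i => //; apply: ltnW.
Qed.

Section Greedy.
Variables (R : realFieldType) (T : finType) (r : T) (E : {set {set T}}) (lam : {set T} -> R)
  (p : T -> R) (alpha : R)
  (A : (T -> R) -> {set {set T}} -> ({set T} -> R) -> {set {set T}}).
Hypotheses (E2 : forall e, e \in E -> #|e| = 2%N) (lam_gt0 : forall e, e \in E -> 0 < lam e)
  (p_ge0 : forall v, 0 <= p v) (p_r : p r = 0) (alpha_ge1 : 1 <= alpha)
  (mds : mds_approx r alpha A).

Local Notation S_ j := (Siter r E lam p A j).
Local Notation T_ S := (gtree r E lam p A S).
Local Notation lenT S := (\sum_(e in T_ S) lenS r E lam S e).
Local Notation massT S := (\sum_(v in verts r (T_ S)) p v).
Local Notation rest S := (\sum_(v | v \notin S) p v).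

Let alpha_gt0 : 0 < alpha := lt_le_trans ltr01 alpha_ge1.

Lemma lam_at_ge0 s v : {subset s <= E} -> 0 <= lam_at r lam s v.
Proof.
move=> sE; rewrite /lam_at; case: ifP => // _.
by rewrite big_seq sumr_ge0 // => e /mem_take /sE /lam_gt0 /ltW.
Qed.

Lemma Siter_succ j : S_ j.+1 = gstep r E lam p A (S_ j).
Proof. exact: iterS. Qed.

Lemma Siter_sub j : S_ j \subset S_ j.+1.
Proof. by rewrite Siter_succ /gstep; case: ifP => _; rewrite ?subsetUl. Qed.

Lemma Siter_mono i j : (i <= j)%N -> S_ i \subset S_ j.
Proof.
apply: (homo_leq (r := fun X Y : {set T} => X \subset Y)) => //.
  by move=> ? ? ?; apply: subset_trans.
exact: Siter_sub.
Qed.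

Lemma root_Siter j : r \in S_ j.
Proof. exact: subsetP (Siter_mono (leq0n j)) _ (set11 r). Qed.

Variable sigma : seq {set T}.
Hypothesis sigma_search : expanding r E [set: T] sigma.

Local Notation opt v := (lam_at r lam sigma v).

(* The time a at which found_mass_le bounds the mass found by sigma by rest S / 2. *)
Let threshold (S : {set T}) := rest S * lenT S / (2 * alpha * massT S).

Section Phase.
Variable S : {set T}.
Hypotheses (rS : r \in S) (gS : guard p S).

Lemma gtree_spec :
  [/\ subtree r (Econ r E S) (T_ S), T_ S != set0 &
    forall F, subtree r (Econ r E S) F -> F != set0 ->
      dens r p (lenS r E lam S) F <= alpha * dens r p (lenS r E lam S) (T_ S)].
Proof.
have [xs sE visT] := expandingP sigma_search.
have nonempty : exists F, subtree r (Econ r E S) F /\ F != set0.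
  have [F [FS vertsF _]] := contract_subtree lam_gt0 rS xs sE.
  exists F; split=> //; apply: contraTneq gS => F0.
  apply/existsPn => v; apply/negP => /andP[vS _].
  have : v \in verts r F by rewrite vertsF visT !inE vS orbT.
  by rewrite F0 verts_set0 inE => /eqP vr; rewrite vr rS in vS.
by have [? [? ?]] := mds p_ge0 (fun e eS => Econ_edge E2 lam_gt0 rS eS) nonempty.
Qed.

Lemma opt_prefix_subtree a : 0 <= a ->
  exists F, [/\ subtree r (Econ r E S) F, \sum_(e in F) lenS r E lam S e <= a
    & forall v, v \notin S -> opt v <= a -> v \in verts r F].
Proof.
move=> a_ge0; have [xs sE visT] := expandingP sigma_search.
pose first_edge v := find (fun e : {set T} => v \in e) sigma.
pose P := [set v | (v != r) && (opt v <= a)].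
pose J := \max_(v in P) (first_edge v).+1.
have [|F [FS vertsF lenF]] := contract_subtree lam_gt0 rS (expanding_seq_take (n := J) xs).
  by move=> e /mem_take /sE.
exists F; split=> //.
  apply: le_trans lenF _; have [P0 | [v vP]] := set_0Vmem P.
    by rewrite /J P0 big_set0 take0 big_nil.
  have P_gt0 : (0 < #|P|)%N by apply/card_gt0P; exists v.
  have [w wP Jw] := eq_bigmax_cond (fun v => (first_edge v).+1) P_gt0.
  by move: wP; rewrite /J Jw inE /lam_at => /andP[/negbTE ->].
move=> v vS opt_v; have vr : v != r by apply: contraNneq vS => ->.
have v_hit : has (fun e : {set T} => v \in e) sigma.
  by rewrite -mem_bigcup_seq; move: (in_setT v); rewrite -visT in_setU1 (negbTE vr).
rewrite vertsF !in_setU1 in_setD (negbTE vr) vS /= /visited in_setU1 (negbTE vr).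
rewrite mem_bigcup_seq (has_take _ v_hit).
by apply: leq_bigmax_cond; rewrite inE vr opt_v.
Qed.

Lemma found_mass_le a : 0 <= a ->
  (\sum_(v | (v \notin S) && (opt v <= a)) p v) * lenT S <= alpha * massT S * a.
Proof.
move=> a_ge0; have [[TS _] T0 T_dens] := gtree_spec.
have [F [FS lenF cover]] := opt_prefix_subtree a_ge0.
have [F0 | F_ne0] := eqVneq F set0.
  rewrite big_pred0 ?mul0r ?mulr_ge0 // ?sumr_ge0 ?(ltW alpha_gt0) //.
  move=> v; apply/negP => /andP[vS /(cover v vS)].
  by rewrite F0 verts_set0 inE => /eqP vr; rewrite vr rS in vS.
apply: density_mul_le (T_dens F FS F_ne0) => //.
- exact: (lenS_sum_gt0 E2 lam_gt0 rS (proj1 FS) F_ne0).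
- exact: (lenS_sum_gt0 E2 lam_gt0 rS TS T0).
- by rewrite mulr_ge0 ?sumr_ge0 ?(ltW alpha_gt0).
- apply: ler_sum_subset => [v /andP[vS /(cover v vS)] | v _] //.
Qed.

Lemma tree_len_gt0 : 0 < lenT S.
Proof. by have [[TS _] T0 _] := gtree_spec; apply: (lenS_sum_gt0 E2 lam_gt0 rS TS T0). Qed.

Lemma tree_mass_gt0 : 0 < massT S.
Proof.
have [_ sE _] := expandingP sigma_search.
have [v /andP[vS pv]] := existsP gS.
have found_gt0 : 0 < \sum_(w | (w \notin S) && (opt w <= opt v)) p w.
  by rewrite (bigD1 v) ?vS ?lexx //= ltr_wpDr ?sumr_ge0.
have pos := lt_le_trans (mulr_gt0 found_gt0 tree_len_gt0) (found_mass_le (lam_at_ge0 v sE)).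
rewrite lt0r sumr_ge0 // andbT; apply: contraTneq pos => ->.
by rewrite mulr0 mul0r ltxx.
Qed.

Lemma tree_verts_inS v : v \in verts r (T_ S) -> v \in S -> v = r.
Proof.
have [[/subsetP TS _] _ _] := gtree_spec.
rewrite in_setU1 => /predU1P[// | /bigcupP[e /TS eS ve] vS].
move: eS; rewrite in_setU inE => /orP[/andP[_ dis] | /imsetP[w]].
  by rewrite (disjointFr dis ve) in vS.
by rewrite inE => /andP[wS _] eE; move: ve wS; rewrite eE => /set2P[// | <-]; rewrite vS.
Qed.

Lemma rest_drop : rest S - rest (S :|: verts r (T_ S)) = massT S.
Proof.
rewrite [rest S]big_mkcond [rest _]big_mkcond [massT S]big_mkcond -sumrB /=.
apply: eq_bigr => v _; rewrite in_setU negb_or.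
have [vS | vS] := boolP (v \in S); have [vT | vT] := boolP (v \in verts r (T_ S));
  rewrite /= ?subr0 ?subrr //.
by rewrite (tree_verts_inS vT vS) p_r.
Qed.

Lemma threshold_ge0 : 0 <= threshold S.
Proof.
have [L_gt0 M_gt0] := (tree_len_gt0, tree_mass_gt0).
by rewrite /threshold divr_ge0 ?mulr_ge0 ?(ltW L_gt0) ?(ltW M_gt0) ?(ltW alpha_gt0) ?sumr_ge0.
Qed.

Lemma rest_le_late_mass : rest S <= 2 * \sum_(v | threshold S < opt v) p v.
Proof.
have M_gt0 := tree_mass_gt0; have L_gt0 := tree_len_gt0.
have := found_mass_le threshold_ge0.
have -> : alpha * massT S * threshold S = rest S / 2 * lenT S.
  by rewrite /threshold; field; rewrite !gt_eqF.
rewrite ler_pM2r // => found_le.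
have late_le : \sum_(v | (v \notin S) && ~~ (opt v <= threshold S)) p v
    <= \sum_(v | threshold S < opt v) p v.
  by apply: ler_sum_subset => [v /andP[_]|//]; rewrite -ltNge.
have rest_split : rest S = \sum_(v | (v \notin S) && (opt v <= threshold S)) p v
    + \sum_(v | (v \notin S) && ~~ (opt v <= threshold S)) p v.
  by rewrite [LHS](bigID (fun v => opt v <= threshold S)).
lra.
Qed.

Lemma len_rest_eq :
  lenT S * rest S = 2 * alpha * ((rest S - rest (S :|: verts r (T_ S))) * threshold S).
Proof.
by rewrite rest_drop /threshold; field; rewrite !gt_eqF ?tree_mass_gt0.
Qed.

End Phase.

Section Run.
Variables (k : nat) (taus : seq (seq {set T})).
Hypotheses (size_taus : size taus = k) (guard_lt : forall i, (i < k)%N -> guard p (S_ i))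
  (stop_k : ~~ guard p (S_ k))
  (taus_spec : forall i, (i < k)%N ->
     exists rho, expanding r (T_ (S_ i)) (verts r (T_ (S_ i))) rho /\
                 replaced r E lam (S_ i) rho (nth [::] taus i)).

Lemma Siter_phase i : (i < k)%N -> S_ i.+1 = S_ i :|: verts r (T_ (S_ i)).
Proof. by move=> ik; rewrite Siter_succ /gstep guard_lt. Qed.

Lemma tau_len_le i : (i < k)%N -> \sum_(e <- nth [::] taus i) lam e <= lenT (S_ i).
Proof.
move=> ik; have [rho [/expandingP[xr rhoT _] [size_eq repl]]] := taus_spec ik.
have [[/subsetP TS _] _ _] := gtree_spec (root_Siter i) (guard_lt ik).
have -> : \sum_(e <- nth [::] taus i) lam e = \sum_(e <- rho) lenS r E lam (S_ i) e.
  rewrite (big_nth set0) [RHS](big_nth set0) size_eq; apply: eq_big_nat => m /andP[_ m_lt].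
  have [root_case other_case] := repl m m_lt.
  have [rm | rm] := boolP (r \in nth set0 rho m); first by case: (root_case rm).
  by rewrite other_case // /lenS (negbTE rm).
rewrite (big_uniq _ (expanding_seq_uniq xr)).
apply: ler_sum_subset => [e /rhoT // | e /TS]; exact: (lenS_ge0 E2 lam_gt0 (root_Siter i)).
Qed.

Lemma tau_covers i v : (i < k)%N -> v \in verts r (T_ (S_ i)) -> v != r ->
  has (fun e : {set T} => v \in e) (nth [::] taus i).
Proof.
move=> ik vT vr; have [rho [/expandingP[_ _ visT] [size_eq repl]]] := taus_spec ik.
have : has (fun e : {set T} => v \in e) rho.
  by move: vT; rewrite -visT /visited in_setU1 (negbTE vr) mem_bigcup_seq.
case/(has_nthP set0) => m m_lt vm; apply/(has_nthP set0); exists m; first by rewrite size_eq.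
have [root_case other_case] := repl m m_lt.
have [rm | rm] := boolP (r \in nth set0 rho m); last by rewrite other_case.
have [+ _] := root_case rm; rewrite inE => /and3P[_ /eqP contracted _].
have : v \in nth set0 rho m :\ r by rewrite in_setD1 vr.
by rewrite -contracted in_setD => /andP[].
Qed.

Lemma prefix_len_le n : (n <= k)%N ->
  \sum_(e <- flatten (take n taus)) lam e <= \sum_(j < n) lenT (S_ j).
Proof.
elim: n => [|n IH] nk; first by rewrite take0 big_nil big_ord0.
rewrite (take_nth [::]) ?size_taus // -cats1 flatten_cat big_cat /= cats0 big_ord_recr /=.
exact: lerD (IH (ltnW nk)) (tau_len_le nk).
Qed.

Variables (sg tail : seq {set T}).
Hypotheses (sg_eq : sg = flatten taus ++ tail) (sg_E : {subset sg <= E}).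

Lemma lam_at_greedy_le v : 0 < p v ->
  lam_at r lam sg v <= \sum_(j < k) (if v \notin S_ j then lenT (S_ j) else 0).
Proof.
move=> pv; have vr : v != r by apply: contraTneq pv => ->; rewrite p_r ltxx.
have vk : v \in S_ k by apply: contraNT stop_k => vk; apply/existsP; exists v; rewrite vk.
have [|i ik /andP[vi vi1]] := exists_entry vk; first by rewrite inE.
have vT : v \in verts r (T_ (S_ i)) by move: vi1; rewrite Siter_phase // in_setU (negbTE vi).
set X := flatten (take i.+1 taus).
have X_hit : has (fun e : {set T} => v \in e) X.
  by rewrite /X (take_nth [::]) ?size_taus // -cats1 flatten_cat has_cat /= cats0 tau_covers ?orbT.
have sgX : sg = X ++ (flatten (drop i.+1 taus) ++ tail).
  by rewrite sg_eq catA /X -flatten_cat cat_take_drop.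
rewrite /lam_at (negbTE vr) sgX find_cat X_hit takel_cat -?has_find //.
apply: (@le_trans _ _ (\sum_(e <- X) lam e)).
  rewrite -[Y in _ <= \sum_(e <- Y) _](cat_take_drop (find (fun e : {set T} => v \in e) X).+1).
  rewrite big_cat lerDl big_seq sumr_ge0 // => e /mem_drop eX.
  by rewrite ltW // lam_gt0 // sg_E // sgX mem_cat eX.
apply: le_trans (prefix_len_le ik) _.
rewrite (big_ord_widen k (fun j => lenT (S_ j)) ik) big_mkcond /=.
apply: ler_sum => j _; case: ifP => [ji | _].
  by rewrite ltnS in ji; rewrite (contra (subsetP (Siter_mono ji) v) vi).
by case: ifP => // _; rewrite ltW // tree_len_gt0 ?root_Siter ?guard_lt.
Qed.

Lemma greedy_cost_le : cost r lam p sg <= \sum_(j < k) lenT (S_ j) * rest (S_ j).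
Proof.
apply: (@le_trans _ _ (\sum_v p v * \sum_(j < k) (if v \notin S_ j then lenT (S_ j) else 0))).
  apply: ler_sum => v _; have [pv0 | pv] := eqVneq (p v) 0; first by rewrite pv0 !mul0r.
  by rewrite ler_wpM2l // lam_at_greedy_le // lt0r pv p_ge0.
under eq_bigr => v _ do rewrite big_distrr.
rewrite exchange_big /=; apply: ler_sum => j _.
rewrite big_distrr /= [leRHS]big_mkcond /=; apply: ler_sum => v _.
by case: ifP => _; rewrite ?mulr0 // mulrC.
Qed.

End Run.

Lemma greedy_approx sg : greedy_output r E lam p A sg -> {subset sg <= E} ->
  cost r lam p sg <= 4 * alpha * cost r lam p sigma.
Proof.
case=> k [taus [tail [size_taus guard_lt stop_k sg_eq taus_spec]]] sg_E.
have [_ sigma_E _] := expandingP sigma_search.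
have phase_eq j : (j < k)%N -> lenT (S_ j) * rest (S_ j)
    = 2 * alpha * ((rest (S_ j) - rest (S_ j.+1)) * threshold (S_ j)).
  by move=> jk; rewrite (Siter_phase guard_lt jk) len_rest_eq ?root_Siter ?guard_lt.
apply: le_trans (greedy_cost_le size_taus guard_lt stop_k taus_spec sg_eq sg_E) _.
rewrite (eq_bigr _ (fun (j : 'I_k) _ => phase_eq j (ltn_ord j))) -mulr_sumr.
have -> : 4 * alpha = 2 * alpha * 2 by ring.
rewrite -(mulrA (2 * alpha)) ler_wpM2l ?mulr_ge0 ?(ltW alpha_gt0) //.
apply: (sum_drops_le_expectation (c := 2) (a := fun j => threshold (S_ j))
  (rho := fun j => rest (S_ j))) => //.
- by move=> v; apply: lam_at_ge0.
- by move=> j jk; apply: threshold_ge0; rewrite ?root_Siter ?guard_lt.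
- move=> j jk; rewrite -subr_ge0 (Siter_phase guard_lt jk) rest_drop ?root_Siter ?guard_lt //.
  exact: sumr_ge0.
- exact: sumr_ge0.
- by move=> j jk; apply: rest_le_late_mass; rewrite ?root_Siter ?guard_lt.
Qed.

End Greedy.

Theorem theorem2 (R : realFieldType) (T : finType) (r : T)
    (E : {set {set T}}) (lam : {set T} -> R) (p : T -> R) (alpha : R)
    (A : (T -> R) -> {set {set T}} -> ({set T} -> R) -> {set {set T}}) :
  (forall e, e \in E -> #|e| = 2%N) ->
  (forall e, e \in E -> 0 < lam e) ->
  (forall v, connect (adj E) r v) ->
  (forall v, 0 <= p v) -> p r = 0 -> \sum_v p v = 1 ->
  1 <= alpha -> mds_approx r alpha A ->
  forall sigma_g : seq {set T},
    greedy_output r E lam p A sigma_g ->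
    expanding r E [set: T] sigma_g ->
    forall sigma : seq {set T}, expanding r E [set: T] sigma ->
      cost r lam p sigma_g <= 4 * alpha * cost r lam p sigma.
Proof.
(* Connectivity is implied by the existence of sigma, and both costs are linear in p. *)
move=> E2 lam_gt0 _ p_ge0 p_r _ alpha_ge1 mds sg sg_greedy /expandingP[_ sg_E _].
move=> sigma sigma_search.
exact: (greedy_approx E2 lam_gt0 p_ge0 p_r alpha_ge1 mds sigma_search sg_greedy sg_E).
Qed.
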